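(* Let $\mathcal{L}$ be a relational language, let $\mathcal{A}$ be an $\mathcal{L}$-structure, and let $\Pi\mathcal{A}=\prod_{i\in I}\mathcal{A}$ be a direct power of $\mathcal{A}$ with nonempty index set $I$. Let $\mathbf{S}=\{E_j(X)\mid j\in J\}$ be a system of $\mathcal{L}(\Pi\mathcal{A})$-equations in a finite set of variables $X$. If for some $i\in I$ the projection $\pi_i(\mathbf{S})$ is inconsistent over $\mathcal{A}$, then $\mathbf{S}$ is inconsistent over $\Pi\mathcal{A}$. Moreover, if $\mathcal{A}$ is $\mathcal{L}(\mathcal{A})$-equationally Noetherian, then every $\mathcal{L}(\Pi\mathcal{A})$-system $\mathbf{S}$ that is inconsistent over $\Pi\mathcal{A}$ is equivalent over $\Pi\mathcal{A}$ to some finite subsystem of $\mathbf{S}$.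
   Context: For an $\mathcal{L}$-structure $\mathcal{B}$, $\mathcal{L}(\mathcal{B})$ denotes $\mathcal{L}$ extended by a constant symbol for each element of $\mathcal{B}$. An $\mathcal{L}(\mathcal{B})$-equation is an atomic formula of $\mathcal{L}(\mathcal{B})$ (i.e. $R(t_1,\dots,t_n)$ with $R\in\mathcal{L}$, or $t_1=t_2$, where each $t_k$ is a variable or a constant). A system is any set of equations in a fixed finite set of variables $X=\{x_1,\dots,x_n\}$; its solution set in $\mathcal{B}$ is $V_{\mathcal{B}}(\mathbf{S})\subseteq \mathcal{B}^n$. A system is inconsistent if its solution set is empty; two systems are equivalent over $\mathcal{B}$ if they have the same solution set in $\mathcal{B}$. $\mathcal{B}$ is $\mathcal{L}(\mathcal{B})$-equationally Noetherian if every $\mathcal{L}(\mathcal{B})$-system is equivalent over $\mathcal{B}$ to a finite subsystem. The direct power $\Pi\mathcal{A}=\prod_{i\in I}\mathcal{A}$ consists of all sequences $[a_i\mid i\in I]$ with each relation $R$ holding coordinatewise: $R(\mathbf{a}^{(1)},\dots,\mathbf{a}^{(n)})$ iff $R(a^{(1)}_i,\dots,a^{(n)}_i)$ for every $i\in I$. $\pi_i$ is the projection onto the $i$-th coordinate. For an $\mathcal{L}(\Pi\mathcal{A})$-equation $E(X,\vec{\mathbf{C}})$ with constants $\vec{\mathbf{C}}$, its $i$-th projection is the $\mathcal{L}(\mathcal{A})$-equation $\pi_i(E)=E(X,\pi_i(\vec{\mathbf{C}}))$, and $\pi_i(\mathbf{S})=\{\pi_i(E_j)\mid j\in J\}$.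 *)

From mathcomp Require Import all_boot.
Set Implicit Arguments. Unset Strict Implicit. Unset Printing Implicit Defensive.

Record language := Language { rel_sym : Type; arity : rel_sym -> nat }.

Record structure (L : language) := Structure {
  carrier :> Type;
  interp : forall R : rel_sym L, ('I_(arity R) -> carrier) -> Prop }.

Inductive term (B : Type) (n : nat) :=
  | Var of 'I_n
  | Cst of B.

Inductive equation (L : language) (B : Type) (n : nat) :=
  | ERel (R : rel_sym L) of ('I_(arity R) -> term B n)
  | EEq of term B n & term B n.

Definition eval_term (B : Type) n (v : 'I_n -> B) (t : term B n) : B :=
  match t with Var x => v x | Cst c => c end.

Definition holds L (B : structure L) n (E : equation L B n) (v : 'I_n -> B) : Prop :=
  match E with
  | ERel R ts => @interp L B R (fun k => eval_term v (ts k))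
  | EEq t1 t2 => eval_term v t1 = eval_term v t2
  end.

Definition solutions L (B : structure L) n (J : Type) (S : J -> equation L B n)
  : ('I_n -> B) -> Prop := fun v => forall j, holds (S j) v.

Definition inconsistent L (B : structure L) n (J : Type) (S : J -> equation L B n) :=
  forall v, ~ solutions S v.

Fixpoint inseq (J : Type) (j : J) (l : seq J) : Prop :=
  match l with [::] => False | x :: l' => x = j \/ inseq j l' end.

Definition equiv_finite_subsystem L (B : structure L) n (J : Type)
  (S : J -> equation L B n) :=
  exists l : seq J, forall v : 'I_n -> B,
    (forall j, inseq j l -> holds (S j) v) <-> solutions S v.

Definition eq_noetherian L (B : structure L) :=
  forall n (J : Type) (S : J -> equation L B n), equiv_finite_subsystem S.

Definition power L (A : structure L) (I : Type) : structure L :=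
  @Structure L (I -> A) (fun R t => forall i, @interp L A R (fun k => t k i)).

Definition proj_term L (A : structure L) (I : Type) (i : I) n
  (t : term (power A I) n) : term A n :=
  match t with Var x => Var A x | Cst c => Cst n (c i) end.

Definition proj_eq L (A : structure L) (I : Type) (i : I) n
  (E : equation L (power A I) n) : equation L A n :=
  match E with
  | ERel R ts => @ERel L A n R (fun k => proj_term i (ts k))
  | EEq t1 t2 => @EEq L A n (proj_term i t1) (proj_term i t2)
  end.

(* An assignment in the power is a family of assignments in A, one per
   coordinate, and it satisfies an equation iff each coordinate satisfies the
   projected equation.  So a solution of S projects to a solution of every
   pi_i(S); conversely, if every pi_i(S) is consistent, choosing a solution in
   each coordinate gives a solution of S.  Hence if S is inconsistent, some
   pi_i(S) is inconsistent over A, and by equational Noetherianity already a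
   finite subsystem of pi_i(S) is; the same finite subsystem of S is then
   inconsistent, hence equivalent to S (both have empty solution set). *)

From Stdlib Require Import Classical ClassicalEpsilon FunctionalExtensionality.
From mathcomp Require Import all_boot.

Set Implicit Arguments.
Unset Strict Implicit.
Unset Printing Implicit Defensive.

Definition finitely_inconsistent L (B : structure L) n (J : Type)
    (S : J -> equation L B n) :=
  exists l : seq J, forall v : 'I_n -> B, ~ (forall j, inseq j l -> holds (S j) v).

Lemma finitely_inconsistent_equiv L (B : structure L) n (J : Type)
    (S : J -> equation L B n) :
  finitely_inconsistent S -> equiv_finite_subsystem S.
Proof.
move=> [l Hl]; exists l => v; split=> [Hv | Hv j _]; last exact: Hv.
by case: (Hl v Hv).
Qed.

Lemma noetherian_finitely_inconsistent L (B : structure L) n (J : Type)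
    (S : J -> equation L B n) :
  eq_noetherian B -> inconsistent S -> finitely_inconsistent S.
Proof.
move=> noethB incS; have [l Hl] := noethB n J S.
by exists l => v /Hl; apply: incS.
Qed.

Section DirectPower.

Variables (L : language) (A : structure L) (I : Type) (n : nat).

Definition coord (v : 'I_n -> power A I) (i : I) : 'I_n -> A := fun x => v x i.

Lemma eval_proj_term (i : I) (t : term (power A I) n) (v : 'I_n -> power A I) :
  eval_term (coord v i) (proj_term i t) = eval_term v t i.
Proof. by case: t. Qed.

Lemma holds_power (E : equation L (power A I) n) (v : 'I_n -> power A I) :
  holds E v <-> forall i, holds (proj_eq i E) (coord v i).
Proof.
case: E => [R ts | t1 t2] /=.
  have eval_args i : (fun k => eval_term (coord v i) (proj_term i (ts k)))
                     = (fun k => eval_term v (ts k) i).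
    by apply: functional_extensionality => k; apply: eval_proj_term.
  by split=> Hv i; move: (Hv i); rewrite eval_args.
split=> [Hv i | Hv]; first by rewrite !eval_proj_term Hv.
by apply: functional_extensionality_dep => i; move: (Hv i); rewrite !eval_proj_term.
Qed.

Variables (J : Type) (S : J -> equation L (power A I) n).

Definition proj_system (i : I) : J -> equation L A n := fun j => proj_eq i (S j).

Lemma solutions_power (v : 'I_n -> power A I) :
  solutions S v <-> forall i, solutions (proj_system i) (coord v i).
Proof.
split=> [Hv i j | Hv j]; first exact: (proj1 (holds_power _ _) (Hv j) i).
by apply/holds_power => i; apply: Hv.
Qed.

Lemma inconsistent_proj_power (i : I) :
  inconsistent (proj_system i) -> inconsistent S.
Proof. by move=> inc_i v /solutions_power Hv; apply: (inc_i _ (Hv i)). Qed.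

Lemma finitely_inconsistent_proj_power (i : I) :
  finitely_inconsistent (proj_system i) -> finitely_inconsistent S.
Proof.
move=> [l inc_i]; exists l => v Hv; apply: (inc_i (coord v i)) => j /Hv.
by move/holds_power; apply.
Qed.

Lemma inconsistent_power_proj :
  inconsistent S -> exists i, inconsistent (proj_system i).
Proof.
move=> incS; apply: NNPP => all_consistent.
have [w Hw] : exists w : I -> 'I_n -> A, forall i, solutions (proj_system i) (w i).
  apply: (choice (fun i => solutions (proj_system i))) => i.
  apply: NNPP => no_sol; apply: all_consistent.
  by exists i => u Hu; apply: no_sol; exists u.
exact: (incS (fun x i => w i x) (proj2 (solutions_power _) Hw)).
Qed.

End DirectPower.

Theorem lemma1 (L : language) (A : structure L) (I : Type) (i0 : I) :
  (forall n (J : Type) (S : J -> equation L (power A I) n) (i : I),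
     inconsistent (fun j => proj_eq i (S j)) -> inconsistent S) /\
  (eq_noetherian A ->
   forall n (J : Type) (S : J -> equation L (power A I) n),
     inconsistent S -> equiv_finite_subsystem S).
Proof.
split=> [n J S i | noethA n J S incS]; first exact: inconsistent_proj_power.
have [i inc_i] := inconsistent_power_proj incS.
apply/finitely_inconsistent_equiv/(finitely_inconsistent_proj_power (i := i)).
exact: noetherian_finitely_inconsistent.
Qed.
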